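(* Let $m$ be a non-negative integer and let $S=(u_0,\dots,u_{n-1})$ be a finite sequence of elements of $\mathbb{Z}/m\mathbb{Z}$. Then $S$ is antisymmetric if and only if its derived sequence $\partial S$ is antisymmetric and $2\sigma(S)=\sigma(\partial S)=0$.
   Context: $\mathbb{Z}/0\mathbb{Z}=\mathbb{Z}$. A finite sequence $(v_0,\dots,v_{\ell-1})$ is antisymmetric if $v_{\ell-1-j}=-v_j$ for all $j$ (the empty sequence is antisymmetric). For $n\ge2$, $\partial S=(-u_j-u_{j+1})_{j=0}^{n-2}$; for $n\le1$, $\partial S$ is the empty sequence. $\sigma(v_0,\dots,v_{\ell-1})=\sum_{j=0}^{\ell-1}v_j$ (zero for the empty sequence). *)

(* Elements of Z/mZ are represented by integer
   representatives; all equalities in Z/mZ are congruences mod m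
   (intdiv's (_ == _ %[mod m])%Z; for m = 0 this is equality in Z,
   for m = 1 it is always true). *)
From mathcomp Require Import all_boot all_order all_algebra.
Set Implicit Arguments. Unset Strict Implicit. Unset Printing Implicit Defensive.
Import Order.TTheory GRing.Theory Num.Theory.
Local Open Scope ring_scope.

Definition antisym_mod (m : nat) (v : seq int) : Prop :=
  forall j : nat, (j < size v)%N ->
    (nth 0 v (size v - 1 - j)%N == - nth 0 v j %[mod m%:Z])%Z.

Definition dseq (u : seq int) : seq int :=
  if (2 <= size u)%N then
    [seq - nth 0 u j - nth 0 u j.+1 | j <- iota 0 (size u - 1)]
  else [::].

Definition seqsum (v : seq int) : int := \sum_(x <- v) x.

(** Write [w_j = u_j + u_(n-1-j)]. Antisymmetry of [S] says that every [w_j]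
    vanishes, and antisymmetry of [∂S] says that every [w_j + w_(j+1)] vanishes,
    because the [j]-th mirror sum of [∂S] is [-(w_j + w_(j+1))]. Moreover
    [2σ(S) = Σ_j w_j] and [σ(∂S) + 2σ(S) = w_0], the latter by telescoping. So
    if all [w_j] vanish the three conditions hold; conversely the two sums
    give [w_0 = 0], and the consecutive sums then propagate this to every
    [w_j]. *)

From mathcomp Require Import all_boot all_order all_algebra.
From mathcomp Require Import ring zify.
Import Order.TTheory GRing.Theory Num.Theory.
Local Open Scope ring_scope.

Lemma forall_rpred_consecutive {V : zmodType} {S : zmodClosed V}
    (w : nat -> V) (n : nat) : (0 < n)%N ->
  (forall j, (j < n)%N -> w j \in S) <->
  w 0%N \in S /\ (forall j, (j < n.-1)%N -> w j + w j.+1 \in S).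
Proof.
move=> n_gt0; split=> [Sw | [Sw0 Swcons]].
  by split=> [|j lt_j_n1]; [|apply: rpredD]; apply: Sw; lia.
elim=> [|j IHj] lt_j_n //.
rewrite -(addKr (w j) (w j.+1)); apply: rpredD.
  by rewrite rpredN; apply: IHj; lia.
by apply: Swcons; lia.
Qed.

Definition mirror_sum (u : seq int) (j : nat) : int :=
  nth 0 u j + nth 0 u (size u - 1 - j).

Lemma antisym_modE (m : nat) (u : seq int) :
  antisym_mod m u <->
  (forall j, (j < size u)%N -> (m%:Z %| mirror_sum u j)%Z).
Proof.
by split=> Hu j /Hu; rewrite eqz_mod_dvd opprK addrC.
Qed.

Lemma size_dseq (u : seq int) : size (dseq u) = (size u).-1.
Proof.
rewrite /dseq; case: ifP => [_|]; first by rewrite size_map size_iota; lia.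
by case: (size u) => [|[|k]].
Qed.

Lemma nth_dseq (u : seq int) (j : nat) : (j < (size u).-1)%N ->
  nth 0 (dseq u) j = - nth 0 u j - nth 0 u j.+1.
Proof.
move=> lt_j_n1; rewrite /dseq ifT; last by lia.
rewrite (nth_map 0%N); last by rewrite size_iota; lia.
by rewrite nth_iota //; lia.
Qed.

Lemma mirror_sum_dseq (u : seq int) (j : nat) : (j < (size u).-1)%N ->
  mirror_sum (dseq u) j = - (mirror_sum u j + mirror_sum u j.+1).
Proof.
move=> lt_j_n1; rewrite /mirror_sum size_dseq !nth_dseq; [|lia|lia].
have -> : ((size u).-1 - 1 - j).+1 = (size u - 1 - j)%N by lia.
have -> : ((size u).-1 - 1 - j = size u - 1 - j.+1)%N by lia.
ring.
Qed.

Lemma antisym_mod_dseqE (m : nat) (u : seq int) :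
  antisym_mod m (dseq u) <->
  (forall j, (j < (size u).-1)%N ->
     (m%:Z %| mirror_sum u j + mirror_sum u j.+1)%Z).
Proof.
rewrite antisym_modE size_dseq.
by split=> Hu j lt_j_n1; move: (Hu j lt_j_n1); rewrite mirror_sum_dseq ?rpredN.
Qed.

Lemma seqsumE (u : seq int) : seqsum u = \sum_(j < size u) nth 0 u j.
Proof. by rewrite /seqsum (big_nth 0) big_mkord. Qed.

Lemma seqsum_mirror (u : seq int) :
  2 * seqsum u = \sum_(j < size u) mirror_sum u j.
Proof.
have sum_rev : \sum_(j < size u) nth 0 u (size u - 1 - j) = seqsum u.
  rewrite seqsumE -(big_mkord xpredT (nth 0 u)) big_rev_mkord subn0.
  by apply: eq_bigr => j _; congr nth; lia.
by rewrite big_split /= sum_rev -seqsumE mulr2n mulrDl mul1r.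
Qed.

Lemma seqsum_dseq (u : seq int) : (0 < size u)%N ->
  seqsum (dseq u) + 2 * seqsum u = mirror_sum u 0.
Proof.
have sum_dseq : seqsum (dseq u) =
    \sum_(j < (size u).-1) (- nth 0 u j - nth 0 u j.+1).
  by rewrite seqsumE size_dseq; apply: eq_bigr => j _; apply: nth_dseq.
rewrite sum_dseq seqsumE /mirror_sum subn0 subn1.
case: (size u) => [|n] // _ /=.
rewrite mulr2n mulrDl mul1r {1}big_ord_recr big_ord_recl /=.
rewrite big_split /= !sumrN.
have -> : \sum_(i < n) nth 0 u (bump 0 i) = \sum_(i < n) nth 0 u i.+1 by [].
ring.
Qed.

Theorem proposition11 (m : nat) (S : seq int) :
  antisym_mod m S <->
  [/\ antisym_mod m (dseq S),
      (2 * seqsum S == 0 %[mod m%:Z])%Z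
    & (seqsum (dseq S) == 0 %[mod m%:Z])%Z].
Proof.
have [/size0nil-> | n_gt0] := posnP (size S).
  by split=> // _; split=> //; rewrite eqz_mod_dvd /seqsum big_nil.
have sum_dseq : seqsum (dseq S) = mirror_sum S 0 - 2 * seqsum S.
  by rewrite -seqsum_dseq // addrK.
rewrite !eqz_mod_dvd !subr0 antisym_modE.
split=> [Sw | [/antisym_mod_dseqE Swcons Ssum Sdsum]].
  have [Sw0 Swcons] := (forall_rpred_consecutive _ _ n_gt0).1 Sw.
  have Ssum : (m%:Z %| 2 * seqsum S)%Z.
    by rewrite seqsum_mirror; apply: rpred_sum => j _; apply: Sw.
  by split=> //; [apply/antisym_mod_dseqE | rewrite sum_dseq rpredB].
apply/(forall_rpred_consecutive _ _ n_gt0); split=> //.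
by rewrite -seqsum_dseq // rpredD.
Qed.
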